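(* Let $(H,\cdot,1,\Delta,\epsilon,S,\rightharpoonup)$ be a Yetter--Drinfeld post-Hopf algebra and let $P(H)=\{x\in H:\Delta(x)=x\otimes 1+1\otimes x\}$ be its space of primitive elements. Then $\rightharpoonup$ restricts to a linear map $P(H)\otimes P(H)\to P(H)$, and $(P(H),[\cdot,\cdot],\rightharpoonup)$ with $[x,y]=x\cdot y-y\cdot x$ is a post-Lie algebra.
   Context: Conventions: $\Bbbk$ is a field; algebras are associative unital, coalgebras coassociative counital; Sweedler notation $\Delta(c)=c_1\otimes c_2$ (summation omitted), iterated as $c_1\otimes c_2\otimes c_3$ etc.; $H\otimes H$ carries the tensor product coalgebra structure. Definition (Yetter--Drinfeld post-Hopf algebra). A tuple $(H,\cdot,1,\Delta,\epsilon,S,\rightharpoonup)$ where $(H,\cdot,1)$ is an algebra, $(H,\Delta,\epsilon)$ is a coalgebra on the same vector space, $S:H\to H$ is linear with $x_1\cdot S(x_2)=S(x_1)\cdot x_2=\epsilon(x)1$ for all $x$, and $\rightharpoonup:H\otimes H\to H$ is a coalgebra morphism, such that for all $x,y,z\in H$: (P1) $x\rightharpoonup(y\cdot z)=(x_1\rightharpoonup y)\cdot(x_2\rightharpoonup z)$; (P2) $x\rightharpoonup(y\rightharpoonup z)=\big(x_1\cdot(x_2\rightharpoonup y)\big)\rightharpoonup z$; (P3) the map $\alpha_\rightharpoonup:H\to\mathrm{End}(H)$, $\alpha_\rightharpoonup(x)(y)=x\rightharpoonup y$, is convolution invertible, i.e. there is $\beta_\rightharpoonup:H\to\mathrm{End}(H)$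 with $\alpha_\rightharpoonup(x_1)\circ\beta_\rightharpoonup(x_2)=\beta_\rightharpoonup(x_1)\circ\alpha_\rightharpoonup(x_2)=\epsilon(x)\mathrm{Id}_H$; (P4) $\epsilon(a\cdot b)=\epsilon(a)\epsilon(b)$, $\epsilon(1)=1_\Bbbk$, $\Delta(1)=1\otimes 1$; (P5) $\Delta(x\cdot y)=\Big(x_1\cdot\alpha_\rightharpoonup(x_2)\big(\beta_\rightharpoonup(x_4)(y_1)\big)\Big)\otimes(x_3\cdot y_2)$; (P6) setting $x\bullet_\rightharpoonup y:=x_1\cdot(x_2\rightharpoonup y)$, $S_\rightharpoonup(x):=\beta_\rightharpoonup(x_1)(S(x_2))$ and $x\leftharpoonup y:=\big(S_\rightharpoonup(x_1\rightharpoonup y_1)\bullet_\rightharpoonup x_2\big)\bullet_\rightharpoonup y_2$, one has $\Delta(S_\rightharpoonup(x))=S_\rightharpoonup(x_2)\otimes S_\rightharpoonup(x_1)$ and $(x_1\rightharpoonup y_1)\otimes(x_2\leftharpoonup y_2)=(x_2\rightharpoonup y_2)\otimes(x_1\leftharpoonup y_1)$. Definition (post-Lie algebra). A Lie algebra $(\mathfrak g,[\cdot,\cdot])$ with a linear map $\rightharpoonup:\mathfrak g\otimes\mathfrak g\to\mathfrak g$ such that for all $x,y,z$: $x\rightharpoonup[y,z]=[x\rightharpoonup y,z]+[y,x\rightharpoonup z]$ and $\big([x,y]+x\rightharpoonup y-y\rightharpoonup x\big)\rightharpoonup z=x\rightharpoonup(y\rightharpoonup z)-y\rightharpoonup(x\rightharpoonup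 z)$. *)

From HB Require Import structures.
From mathcomp Require Import all_boot all_order all_algebra.
Set Implicit Arguments. Unset Strict Implicit. Unset Printing Implicit Defensive.
Import GRing.Theory.
Local Open Scope ring_scope.

(* Finite tensors.  An element of V (x) V is represented by a finite    *)
(* list of pairs [(a_i,b_i)] standing for sum_i a_i (x) b_i; two such   *)
(* lists denote the same tensor iff every bilinear map (into any        *)
(* K-vector space W) takes the same value on them (universal property   *)
(* of the tensor product).  Likewise for V (x) V (x) V.                 *)
Section Tensors.
Variables (K : fieldType) (V : lmodType K).

Definition bilinear_to (W : lmodType K) (f : V -> V -> W) : Prop :=
  (forall (a : K) u v w, f (a *: u + v) w = a *: f u w + f v w) /\
  (forall (a : K) u v w, f w (a *: u + v) = a *: f w u + f w v).

Definition trilinear_to (W : lmodType K) (f : V -> V -> V -> W) : Prop :=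
  (forall (a : K) u v w t, f (a *: u + v) w t = a *: f u w t + f v w t) /\
  (forall (a : K) u v w t, f w (a *: u + v) t = a *: f w u t + f w v t) /\
  (forall (a : K) u v w t, f w t (a *: u + v) = a *: f w t u + f w t v).

Definition teq2 (s t : seq (V * V)) : Prop :=
  forall (W : lmodType K) (f : V -> V -> W), bilinear_to f ->
    \sum_(p <- s) f p.1 p.2 = \sum_(p <- t) f p.1 p.2.

Definition teq3 (s t : seq (V * V * V)) : Prop :=
  forall (W : lmodType K) (f : V -> V -> V -> W), trilinear_to f ->
    \sum_(p <- s) f p.1.1 p.1.2 p.2 = \sum_(p <- t) f p.1.1 p.1.2 p.2.

Definition tscale (a : K) (s : seq (V * V)) : seq (V * V) :=
  [seq (a *: p.1, p.2) | p <- s].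

End Tensors.

(* H is an associative unital K-algebra; the coproduct is               *)
(* D : H -> H (x) H (lists of pairs, D x = sum x_1 (x) x_2), the counit *)
(* eps : H -> K, S : H -> H, hr x y = x -> y (the map H (x) H -> H,     *)
(* given as a bilinear map) and beta the convolution inverse of         *)
(* alpha(x) = (x -> _).                                                 *)
Section YD.
Variables (K : fieldType) (H : algType K).
Variables (D : H -> seq (H * H)) (eps : H -> K) (S : H -> H)
          (hr : H -> H -> H) (beta : H -> H -> H).

Definition D2l (x : H) : seq (H * H * H) :=
  flatten [seq [seq (q.1, q.2, p.2) | q <- D p.1] | p <- D x].
Definition D2r (x : H) : seq (H * H * H) :=
  flatten [seq [seq (p.1, q.1, q.2) | q <- D p.2] | p <- D x].
Definition D3 (x : H) : seq (H * H * H * H) :=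
  flatten [seq [seq (q.1, q.2, t.1.2, t.2) | q <- D t.1.1] | t <- D2l x].

Definition bul (x y : H) : H := \sum_(p <- D x) p.1 * hr p.2 y.
Definition Shr (x : H) : H := \sum_(p <- D x) beta p.1 (S p.2).
Definition lhr (x y : H) : H :=
  \sum_(p <- D x) \sum_(q <- D y) bul (bul (Shr (hr p.1 q.1)) p.2) q.2.

Record is_YDPostHopf : Prop := {
  D_linear : forall (a : K) (x y : H),
    teq2 (D (a *: x + y)) (tscale a (D x) ++ D y);
  eps_linear : forall (a : K) (x y : H), eps (a *: x + y) = a * eps x + eps y;
  coassoc : forall x, teq3 (D2l x) (D2r x);
  counit_l : forall x, \sum_(p <- D x) eps p.1 *: p.2 = x;
  counit_r : forall x, \sum_(p <- D x) eps p.2 *: p.1 = x;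
  S_linear : forall (a : K) (x y : H), S (a *: x + y) = a *: S x + S y;
  antipode_l : forall x, \sum_(p <- D x) p.1 * S p.2 = eps x *: 1;
  antipode_r : forall x, \sum_(p <- D x) S p.1 * p.2 = eps x *: 1;
  (* -> : H (x) H -> H linear and a coalgebra morphism (H (x) H with the
     tensor product coalgebra structure) *)
  hr_bilinear : bilinear_to hr;
  hr_coalg_D : forall x y,
    teq2 (D (hr x y)) [seq (hr p.1 q.1, hr p.2 q.2) | p <- D x, q <- D y];
  hr_coalg_eps : forall x y, eps (hr x y) = eps x * eps y;
  P1 : forall x y z, hr x (y * z) = \sum_(p <- D x) hr p.1 y * hr p.2 z;
  P2 : forall x y z, hr x (hr y z) = hr (\sum_(p <- D x) p.1 * hr p.2 y) z;
  beta_bilinear : bilinear_to beta;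
  P3_l : forall x y, \sum_(p <- D x) hr p.1 (beta p.2 y) = eps x *: y;
  P3_r : forall x y, \sum_(p <- D x) beta p.1 (hr p.2 y) = eps x *: y;
  P4_eps_mul : forall a b, eps (a * b) = eps a * eps b;
  P4_eps1 : eps 1 = 1;
  P4_D1 : teq2 (D 1) [:: (1, 1)];
  P5 : forall x y,
    teq2 (D (x * y))
      [seq (u.1.1.1 * hr u.1.1.2 (beta u.2 v.1), u.1.2 * v.2)
         | u <- D3 x, v <- D y];
  P6_S : forall x, teq2 (D (Shr x)) [seq (Shr p.2, Shr p.1) | p <- D x];
  P6_YD : forall x y,
    teq2 [seq (hr p.1 q.1, lhr p.2 q.2) | p <- D x, q <- D y]
         [seq (hr p.2 q.2, lhr p.1 q.1) | p <- D x, q <- D y]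
}.

Definition primitive (x : H) : Prop := teq2 (D x) [:: (x, 1); (1, x)].

End YD.

Record is_postLie (K : fieldType) (V : lmodType K) (P : V -> Prop)
    (br act : V -> V -> V) : Prop := {
  sub0 : P 0;
  subD : forall (a : K) x y, P x -> P y -> P (a *: x + y);
  br_closed : forall x y, P x -> P y -> P (br x y);
  act_closed : forall x y, P x -> P y -> P (act x y);
  br_linear_l : forall (a : K) x y z, P x -> P y -> P z ->
    br (a *: x + y) z = a *: br x z + br y z;
  br_linear_r : forall (a : K) x y z, P x -> P y -> P z ->
    br z (a *: x + y) = a *: br z x + br z y;
  br_alt : forall x, P x -> br x x = 0;
  br_jacobi : forall x y z, P x -> P y -> P z ->
    br x (br y z) + br y (br z x) + br z (br x y) = 0;
  act_linear_l : forall (a : K) x y z, P x -> P y -> P z ->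
    act (a *: x + y) z = a *: act x z + act y z;
  act_linear_r : forall (a : K) x y z, P x -> P y -> P z ->
    act z (a *: x + y) = a *: act z x + act z y;
  postLie_1 : forall x y z, P x -> P y -> P z ->
    act x (br y z) = br (act x y) z + br y (act x z);
  postLie_2 : forall x y z, P x -> P y -> P z ->
    act (br x y + act x y - act y x) z = act x (act y z) - act y (act x z)
}.

From HB Require Import structures.
From mathcomp Require Import all_boot all_order all_algebra.
Import GRing.Theory.
Local Open Scope ring_scope.
Set Implicit Arguments.
Unset Strict Implicit.

(* The action of the unit is trivial: [1 -> _] is an algebra endomorphism
   with inverse [beta 1], and (P2) at [x = y = 1] makes it idempotent.
   Linearising (P1), the counit axiom and (P3) at a primitive [x] then gives
   [x -> 1 = 0], [eps x = 0] and [beta x = - (x -> _)].  With these, the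
   coalgebra-morphism property of [->] shows that [->] preserves primitives,
   (P5) gives [D (x y) = x y (x) 1 + x (x) y + y (x) x + 1 (x) x y], so
   commutators of primitives are primitive, (P1) makes [x -> _] a derivation
   and (P2) reads [x -> (y -> z) = (x y + x -> y) -> z]; antisymmetrising the
   latter in [x, y] is the second post-Lie identity. *)

Section Linearity.
Variables (K : fieldType) (U W : lmodType K).

Lemma linear_fun0 (g : U -> W) : linear g -> g 0 = 0.
Proof. by move=> hg; rewrite -(subrr 0) (zmod_morphism_linear hg) subrr. Qed.

Lemma linear_funB (g : U -> W) u v : linear g -> g (u - v) = g u - g v.
Proof. by move=> hg; rewrite (zmod_morphism_linear hg). Qed.

Lemma linear_funN (g : U -> W) u : linear g -> g (- u) = - g u.
Proof. by move=> hg; rewrite -sub0r linear_funB // linear_fun0 // sub0r. Qed.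

Lemma linear_funZ (g : U -> W) a u : linear g -> g (a *: u) = a *: g u.
Proof. by move=> hg; have := hg a u 0; rewrite addr0 linear_fun0 // addr0. Qed.

Lemma linear_idfun : linear (fun u : U => u).
Proof. by []. Qed.

Lemma linear_big (I : Type) (s : seq I) (F : I -> U -> W) :
  (forall i, linear (F i)) -> linear (fun u => \sum_(i <- s) F i u).
Proof.
move=> hF a u v; rewrite scaler_sumr -big_split /=.
by apply: eq_bigr => i _; apply: hF.
Qed.

Lemma bilinear_toP (f : U -> U -> W) :
  (forall w, linear (f^~ w)) -> (forall w, linear (f w)) -> bilinear_to f.
Proof. by move=> hl hr; split=> a u v w; [apply: hl | apply: hr]. Qed.

Lemma bilinear_linl (f : U -> U -> W) w : bilinear_to f -> linear (f^~ w).
Proof. by case=> hl _ a u v; apply: hl. Qed.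

Lemma bilinear_linr (f : U -> U -> W) w : bilinear_to f -> linear (f w).
Proof. by case=> _ hr a u v; apply: hr. Qed.

Lemma bilinear0l (f : U -> U -> W) w : bilinear_to f -> f 0 w = 0.
Proof. by move=> hf; exact: linear_fun0 (bilinear_linl w hf). Qed.

Lemma bilinear0r (f : U -> U -> W) w : bilinear_to f -> f w 0 = 0.
Proof. by move=> hf; exact: linear_fun0 (bilinear_linr w hf). Qed.

Lemma bilinearNl (f : U -> U -> W) u w : bilinear_to f -> f (- u) w = - f u w.
Proof. by move=> hf; exact: linear_funN u (bilinear_linl w hf). Qed.

Lemma bilinearBl (f : U -> U -> W) u v w :
  bilinear_to f -> f (u - v) w = f u w - f v w.
Proof. by move=> hf; exact: linear_funB u v (bilinear_linl w hf). Qed.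

Lemma bilinearBr (f : U -> U -> W) u v w :
  bilinear_to f -> f w (u - v) = f w u - f w v.
Proof. by move=> hf; exact: linear_funB u v (bilinear_linr w hf). Qed.

End Linearity.

Section Composition.
Variables (K : fieldType) (U V W : lmodType K).

Lemma linear_compl (f : V -> V -> W) (g : U -> V) w :
  bilinear_to f -> linear g -> linear (fun u => f (g u) w).
Proof. by move=> hf hg a u v; rewrite hg; apply: (bilinear_linl w hf). Qed.

Lemma linear_compr (f : V -> V -> W) (g : U -> V) w :
  bilinear_to f -> linear g -> linear (fun u => f w (g u)).
Proof. by move=> hf hg a u v; rewrite hg; apply: (bilinear_linr w hf). Qed.

End Composition.

Lemma big_pair_eta (I J : Type) (R : nmodType) (s : seq (I * J)) (F : I * J -> R) :
  \sum_(p <- s) F (p.1, p.2) = \sum_(p <- s) F p.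
Proof. by apply: eq_bigr => -[]. Qed.

Section AlgebraLinearity.
Variables (K : fieldType) (U : lmodType K) (A : algType K).

Lemma linear_mull (g : U -> A) w : linear g -> linear (fun u => w * g u).
Proof. by move=> hg a u v; rewrite hg mulrDr scalerAr. Qed.

Lemma linear_mulr (g : U -> A) w : linear g -> linear (fun u => g u * w).
Proof. by move=> hg a u v; rewrite hg mulrDl scalerAl. Qed.

End AlgebraLinearity.

Section Commutator.
Variable R : pzRingType.

Lemma commutator_jacobi (x y z : R) :
  x * (y * z - z * y) - (y * z - z * y) * x
  + (y * (z * x - x * z) - (z * x - x * z) * y)
  + (z * (x * y - y * x) - (x * y - y * x) * z) = 0.
Proof.
rewrite !mulrBr !mulrBl !mulrA !opprB !addrA.
rewrite (ACl ((1*12)*(2*7)*(3*10)*(4*5)*(6*11)*(8*9))%AC) /=.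
by rewrite !addrN !addNr !addr0.
Qed.

End Commutator.

Section YetterDrinfeldPostHopf.
Variables (K : fieldType) (H : algType K).
Variables (D : H -> seq (H * H)) (eps : H -> K) (S : H -> H)
          (hr : H -> H -> H) (beta : H -> H -> H).
Hypothesis YD : is_YDPostHopf D eps S hr beta.

Let hr_bilinear := hr_bilinear YD.
Let beta_bilinear := beta_bilinear YD.

Lemma sum_D_linear (W : lmodType K) (F : H * H -> W) :
  bilinear_to (fun a b => F (a, b)) -> linear (fun u => \sum_(p <- D u) F p).
Proof.
move=> hF a u v; have := D_linear YD a u v hF.
rewrite /tscale big_cat big_map scaler_sumr !big_pair_eta => ->.
congr (_ + _); apply: eq_bigr => -[p1 p2] _ /=; exact: linear_funZ (bilinear_linl _ hF).
Qed.

Lemma sum_D1 (W : lmodType K) (F : H * H -> W) :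
  bilinear_to (fun a b => F (a, b)) -> \sum_(p <- D 1) F p = F (1, 1).
Proof.
by move=> hF; have := P4_D1 YD hF; rewrite big_seq1 big_pair_eta.
Qed.

Lemma sum_D_primitive (W : lmodType K) (F : H * H -> W) x :
  primitive D x -> bilinear_to (fun a b => F (a, b)) ->
  \sum_(p <- D x) F p = F (x, 1) + F (1, x).
Proof.
by move=> hx hF; have := hx _ _ hF; rewrite !big_cons big_nil addr0 big_pair_eta.
Qed.

Ltac linearity := simpl; first
 [ exact: linear_idfun
 | apply: linear_big => ?; linearity
 | apply: sum_D_linear; apply: bilinear_toP => ?; linearity
 | apply: linear_mull; linearity
 | apply: linear_mulr; linearity
 | apply: linear_compl; [assumption | linearity]
 | apply: linear_compr; [assumption | linearity] ].

Ltac bilinearity := apply: bilinear_toP => ?; linearity.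

Lemma hr1_beta1 y : hr 1 (beta 1 y) = y.
Proof.
by have := P3_l YD 1 y; rewrite sum_D1 /= ?(P4_eps1 YD) ?scale1r //; bilinearity.
Qed.

Lemma beta1_hr1 y : beta 1 (hr 1 y) = y.
Proof.
by have := P3_r YD 1 y; rewrite sum_D1 /= ?(P4_eps1 YD) ?scale1r //; bilinearity.
Qed.

Lemma hr1M y z : hr 1 (y * z) = hr 1 y * hr 1 z.
Proof. by rewrite (P1 YD) sum_D1 //; bilinearity. Qed.

Lemma hr1_1 : hr 1 1 = 1.
Proof. by have := hr1M 1 (beta 1 1); rewrite mul1r hr1_beta1 mulr1. Qed.

Lemma hr1 y : hr 1 y = y.
Proof.
have := P2 YD 1 1 y; rewrite sum_D1 /=; last by bilinearity.
by rewrite hr1_1 mul1r => /(congr1 (beta 1)); rewrite !beta1_hr1.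
Qed.

Lemma beta1 y : beta 1 y = y.
Proof. by rewrite -{2}(hr1_beta1 y) hr1. Qed.

Section Primitive.
Variable x : H.
Hypothesis x_prim : primitive D x.

Lemma hr_primitive1 : hr x 1 = 0.
Proof.
have := P1 YD x 1 1; rewrite mulr1 sum_D_primitive //=; last by bilinearity.
by rewrite hr1_1 mulr1 mul1r -{1}[hr x 1]addr0 => /(addrI (hr x 1)) <-.
Qed.

Lemma eps_primitive : eps x = 0.
Proof.
have eps_bilinear : bilinear_to (fun (a : H) (b : H) => eps a *: b).
  apply: bilinear_toP => w a u v /=; first by rewrite (eps_linear YD) scalerDl scalerA.
  by rewrite scalerDr !scalerA mulrC.
have := counit_l YD x.
rewrite (sum_D_primitive (F := fun p => eps p.1 *: p.2) x_prim eps_bilinear) /=.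
rewrite (P4_eps1 YD) scale1r => /(congr1 (+%R^~ (- x))) /=.
rewrite addrK subrr => /eqP.
by rewrite scaler_eq0 oner_eq0 orbF => /eqP.
Qed.

Lemma beta_primitive y : beta x y = - hr x y.
Proof.
have := P3_r YD x y; rewrite sum_D_primitive //=; last by bilinearity.
by rewrite eps_primitive scale0r hr1 beta1 => /eqP; rewrite addr_eq0 => /eqP.
Qed.

Lemma hr_primitiveM y z : hr x (y * z) = hr x y * z + y * hr x z.
Proof. by rewrite (P1 YD) sum_D_primitive //= ?hr1 //; bilinearity. Qed.

Lemma hr_primitive_hr y z : hr x (hr y z) = hr (x * y + hr x y) z.
Proof. by rewrite (P2 YD) sum_D_primitive //= ?hr1 ?mul1r //; bilinearity. Qed.

End Primitive.

Lemma primitive0 : primitive D 0.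
Proof.
move=> W f hf; rewrite !big_cons big_nil addr0 /=.
rewrite (bilinear0l _ hf) (bilinear0r _ hf) addr0.
exact: linear_fun0 (sum_D_linear (F := fun p => f p.1 p.2) hf).
Qed.

Lemma primitiveD a x y :
  primitive D x -> primitive D y -> primitive D (a *: x + y).
Proof.
move=> hx hy W f hf; rewrite (sum_D_linear (F := fun p => f p.1 p.2)) //.
rewrite (hx _ _ hf) (hy _ _ hf) !big_cons !big_nil !addr0 /=.
case: (hf) => fl fr; rewrite fl fr.
by rewrite scalerDr addrACA.
Qed.

Lemma primitive_hr x y : primitive D x -> primitive D y -> primitive D (hr x y).
Proof.
move=> hx hy W f hf; rewrite (hr_coalg_D YD x y hf) big_allpairs_dep /=.
rewrite sum_D_primitive //=; last by bilinearity.
rewrite !(sum_D_primitive hy) /=; try by bilinearity.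
rewrite !big_cons big_nil addr0 /= !hr1 !hr_primitive1 //.
by rewrite (bilinear0l _ hf) (bilinear0r _ hf) addr0 add0r.
Qed.

(* In (P5) the terms [f (x -> y) 1] and [f (beta x y) 1] cancel, as
   [beta x = - (x -> _)]. *)
Lemma sum_D_mul_primitive x y (W : lmodType K) (f : H -> H -> W) :
  primitive D x -> primitive D y -> bilinear_to f ->
  \sum_(p <- D (x * y)) f p.1 p.2 = f (x * y) 1 + f x y + f y x + f 1 (x * y).
Proof.
move=> hx hy hf; rewrite (P5 YD x y hf) big_allpairs_dep /=.
rewrite /D3 big_flatten big_map /=; under eq_bigr => t _ do rewrite big_map /=.
rewrite /D2l big_flatten big_map /=; under eq_bigr => t _ do rewrite big_map /=.
do 3 (rewrite (sum_D_primitive hx) /=; last by bilinearity).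
rewrite !sum_D1 /=; try by bilinearity.
rewrite !(sum_D_primitive hy) /=; try by bilinearity.
rewrite !hr1 !beta1 !beta_primitive // !hr_primitive1 // oppr0 !mul1r !mulr1.
rewrite ?hr1 ?(bilinear0l _ hf) ?(bilinear0r _ hf) !addr0 (bilinearNl _ _ hf).
by rewrite addrAC -(addrA _ (f (hr x y) 1)) addrN addr0 !addrA.
Qed.

Lemma primitive_commutator x y :
  primitive D x -> primitive D y -> primitive D (x * y - y * x).
Proof.
move=> hx hy W f hf.
rewrite (linear_funB _ _ (sum_D_linear (F := fun p => f p.1 p.2) hf)).
rewrite !sum_D_mul_primitive // !big_cons big_nil addr0 /=.
rewrite (bilinearBl _ _ _ hf) (bilinearBr _ _ _ hf) !opprD !addrA.
rewrite (ACl ((1*5)*(4*8)*(2*7)*(3*6))%AC) /=.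
by rewrite !addrN !addr0 addrA.
Qed.

End YetterDrinfeldPostHopf.

Unset Implicit Arguments.

Theorem mainTheorem4 (K : fieldType) (H : algType K)
    (D : H -> seq (H * H)) (eps : H -> K) (S : H -> H)
    (hr : H -> H -> H) (beta : H -> H -> H) :
  is_YDPostHopf D eps S hr beta ->
  (forall x y : H, primitive D x -> primitive D y -> primitive D (hr x y)) /\
  is_postLie (primitive D) (fun x y : H => x * y - y * x) hr.
Proof.
move=> YD; have hr_bil := hr_bilinear YD.
split; first exact: (primitive_hr YD).
constructor.
- exact: (primitive0 YD).
- exact: (primitiveD YD).
- exact: (primitive_commutator YD).
- exact: (primitive_hr YD).
- by move=> a x y z _ _ _; rewrite mulrDl mulrDr -scalerAl -scalerAr scalerBr opprD addrACA.
- by move=> a x y z _ _ _; rewrite mulrDr mulrDl -scalerAr -scalerAl scalerBr opprD addrACA.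
- by move=> x _; apply: subrr.
- by move=> x y z _ _ _; apply: commutator_jacobi.
- by move=> a x y z _ _ _; apply: (bilinear_linl z hr_bil).
- by move=> a x y z _ _ _; apply: (bilinear_linr z hr_bil).
- move=> x y z hx _ _.
  by rewrite (bilinearBr _ _ _ hr_bil) !(hr_primitiveM YD hx) (addrC (hr x z * y)) opprD addrACA.
- move=> x y z hx hy _.
  rewrite (hr_primitive_hr YD hx) (hr_primitive_hr YD hy) -(bilinearBl _ _ _ hr_bil).
  by congr (hr _ z); rewrite opprD addrACA !addrA.
Qed.
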